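(* Let $S=\sigma_0,\dots,\sigma_l$ be an $H$-recoloring sequence of $G$, and let $W$ be any walk in $G$ from a vertex $u$ to a vertex $v$. Then $$\overline{S(v)} = \overline{\sigma_0(W)}^{-1}\cdot \overline{S(u)}\cdot \overline{\sigma_l(W)}.$$
   Context: All graphs are finite and undirected. $G$ is a connected loopless graph with at least one edge. $H$ is a connected graph with at least one edge, possibly with loops, having the monochromatic neighborhood property: for all $a,b\in V(H)$, $|N_H(a)\cap N_H(b)|\le 1$, where $N_H(a)=\{w: aw\in E(H)\}$ (so $a\in N_H(a)$ iff $H$ has a loop at $a$). An $H$-coloring of $G$ is a map $\sigma:V(G)\to V(H)$ such that $uv\in E(G)$ implies $\sigma(u)\sigma(v)\in E(H)$. An $H$-recoloring sequence is a sequence $\sigma_0,\dots,\sigma_l$ of $H$-colorings of $G$ in which any two consecutive colorings differ in the color of exactly one vertex. Walks: an oriented edge of a graph is an ordered pair $(x,y)$ with $xy$ an edge; $(x,y)^{-1}=(y,x)$. A walk from $x$ to $y$ is a sequence of oriented edges $e_1\dots e_k$ where $e_1$ starts at $x$, $e_k$ ends at $y$, and each $e_{i+1}$ starts where $e_i$ ends; $\varepsilon$ denotes the empty walk; the length is $k$; $W_1W_2$ is concatenation and $W^{-1}=e_k^{-1}\dots e_1^{-1}$. A walk is reduced if it has no two consecutive edges $e_ie_{i+1}$ with $e_{i+1}=e_i^{-1}$; $\overline{W}$ denotes the (unique) reduced walk obtained from $W$ by repeatedly deleting such consecutive pairs. For reduced walks $A,B$ with $B$ starting where $A$ ends, $A\cdot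 B:=\overline{AB}$ (an associative partial operation). $\pi(H)$ (the fundamental groupoid) is the set of reduced walks in $H$ with $\cdot$ and inversion. For a walk $W=(x_0,x_1)(x_1,x_2)\dots(x_{k-1},x_k)$ in $G$ and an $H$-coloring $\alpha$, $\alpha(W)$ is the walk $(\alpha(x_0),\alpha(x_1))\dots(\alpha(x_{k-1}),\alpha(x_k))$ in $H$. Vertex walks: if $\sigma_1$ is obtained from $\sigma_0$ by changing the color of one vertex $w$ from $a$ to $b\neq a$, then all neighbors of $w$ have the same color $h$ in $\sigma_0$ and $\sigma_1$ (the unique element of $N_H(a)\cap N_H(b)$). For this one-step sequence $S=\sigma_0,\sigma_1$ define, for $v\in V(G)$, $S(v)=\varepsilon$ if $v\neq w$ and $S(w)=(a,h)(h,b)$. For the empty sequence ($l=0$) $S(v)=\varepsilon$, and for $S=\sigma_0,\dots,\sigma_l$ with $l>1$, $S(v)=S_1(v)S_2(v)\cdots S_l(v)$ where $S_i$ is the one-step sequence $\sigma_{i-1},\sigma_i$. Thus $S(v)$ is a walk in $H$ from $\sigma_0(v)$ to $\sigma_l(v)$. *)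

From mathcomp Require Import all_boot.
Set Implicit Arguments. Unset Strict Implicit. Unset Printing Implicit Defensive.

Definition oedge (T : Type) := (T * T)%type.
Definition walk (T : Type) := seq (oedge T).

Fixpoint is_walk (T : Type) (e : T -> T -> bool) (x y : T) (W : walk T) : Prop :=
  match W with
  | [::] => x = y
  | ed :: W' => ed.1 = x /\ e ed.1 ed.2 /\ is_walk e ed.2 y W'
  end.

Definition einv (T : Type) (ed : oedge T) : oedge T := (ed.2, ed.1).

Definition winv (T : Type) (W : walk T) : walk T := rev (map (@einv T) W).

Fixpoint reducedb (T : eqType) (W : walk T) : bool :=
  match W with
  | e1 :: ((e2 :: _) as W') => (e2 != einv e1) && reducedb W'
  | _ => true
  end.

Definition reduce (T : eqType) (W : walk T) : walk T :=
  foldr (fun ed acc => match acc with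
                       | ed' :: t => if ed' == einv ed then t else ed :: acc
                       | [::] => [:: ed]
                       end) [::] W.

Definition wdot (T : eqType) (A B : walk T) : walk T := reduce (A ++ B).

Definition wmap (V C : Type) (a : V -> C) (W : walk V) : walk C :=
  map (fun ed => (a ed.1, a ed.2)) W.

Definition is_Hcoloring (V C : Type) (eG : V -> V -> bool) (eH : C -> C -> bool)
  (s : V -> C) : Prop := forall u v, eG u v -> eH (s u) (s v).

Definition differ_one (V : Type) (C : eqType) (s t : V -> C) : Prop :=
  exists w, s w != t w /\ forall x, x <> w -> s x = t x.

(* sigma_0, rest : the recoloring sequence sigma_0 :: rest *)
Fixpoint is_recoloring_seq (V : Type) (C : eqType) (eG : V -> V -> bool)
  (eH : C -> C -> bool) (s0 : V -> C) (rest : seq (V -> C)) : Prop :=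
  match rest with
  | [::] => is_Hcoloring eG eH s0
  | s1 :: r => is_Hcoloring eG eH s0 /\ differ_one s0 s1 /\
               is_recoloring_seq eG eH s1 r
  end.

(* one-step vertex walk S(v) for S = s, t:  (a,h)(h,b) at the recolored
   vertex, with h the (unique) common neighbour of a and b; empty elsewhere *)
Definition step_walk (V : Type) (C : finType) (eH : rel C) (s t : V -> C) (v : V)
  : walk C :=
  if s v == t v then [::] else
  match [pick h | eH (s v) h && eH h (t v)] with
  | Some h => [:: (s v, h); (h, t v)]
  | None => [::]
  end.

Fixpoint seq_walk (V : Type) (C : finType) (eH : rel C) (s0 : V -> C)
  (rest : seq (V -> C)) (v : V) : walk C :=
  match rest with
  | [::] => [::]
  | s1 :: r => step_walk eH s0 s1 v ++ seq_walk eH s1 r v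
  end.

Definition mono_nbhd (C : finType) (eH : rel C) : Prop :=
  forall a b : C, #|[pred w | eH a w && eH b w]| <= 1.

(* A walk acts on reduced walks by pushing its edges one at a time, cancelling
   against the head; two walks are freely equivalent when they act alike.  This
   action realises free reduction, so freely equivalent walks have the same
   reduced form, and equivalence is a congruence for concatenation.

   For a single recoloring step at the vertex w and an edge xy of G, the walks
   S(x) t(xy) and s(xy) S(y) are freely equivalent: if x = w, the recolored
   vertex uses the common neighbour h = s(y) of its two colors (unique by the
   monochromatic neighbourhood property), so S(w) t(wy) = (a,h)(h,b)(b,h)
   backtracks to s(wy); symmetrically if y = w.  Chaining along W and along the
   recoloring sequence gives S(u) s_l(W) ~ s_0(W) S(v), hence the theorem. *)
From Stdlib Require Import Setoid Morphisms.
From mathcomp Require Import all_boot.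
Set Implicit Arguments. Unset Strict Implicit. Unset Printing Implicit Defensive.

Section FreeReduction.
Variable T : eqType.
Implicit Types (e : oedge T) (A B Y : walk T).

Definition push_edge e Y : walk T :=
  match Y with
  | e' :: Y' => if e' == einv e then Y' else e :: Y
  | [::] => [:: e]
  end.

Definition push_walk A Y : walk T := foldr push_edge Y A.

Lemma reduce_push_walk A : reduce A = push_walk A [::].
Proof. by []. Qed.

Lemma push_walk_cat A B Y : push_walk (A ++ B) Y = push_walk A (push_walk B Y).
Proof. exact: foldr_cat. Qed.

Lemma einvK : involutive (@einv T).
Proof. by case. Qed.

Lemma reducedb_behead e Y : reducedb (e :: Y) -> reducedb Y.
Proof. by case: Y => //= e' Y /andP[]. Qed.

Lemma reducedb_push_edge e Y : reducedb Y -> reducedb (push_edge e Y).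
Proof.
case: Y => [|e' Y] //= redY; case: ifP => [_|e'N]; first exact: reducedb_behead redY.
by rewrite /= e'N redY.
Qed.

Lemma reducedb_push_walk A Y : reducedb Y -> reducedb (push_walk A Y).
Proof. by elim: A => //= e A IH redY; apply/reducedb_push_edge/IH. Qed.

Lemma push_edgeK e Y : reducedb Y -> push_edge (einv e) (push_edge e Y) = Y.
Proof.
case: Y => [|e' Y] /=; first by rewrite einvK eqxx.
case: ifP => [/eqP-> |_ _]; last by rewrite /= einvK eqxx.
by case: Y => [|e'' Y] //= /andP[/negbTE->].
Qed.

Lemma push_walk_push_edge e B Y : reducedb Y ->
  push_walk (push_edge e B) Y = push_edge e (push_walk B Y).
Proof.
case: B => [|e' B] //= redY; case: ifP => //= /eqP->.
by rewrite -{1}(einvK e) push_edgeK //; apply: reducedb_push_walk.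
Qed.

Lemma push_walk_reduce A Y : reducedb Y -> push_walk (reduce A) Y = push_walk A Y.
Proof. by move=> redY; elim: A => //= e A IH; rewrite push_walk_push_edge // IH. Qed.

Definition free_equiv A B :=
  forall Y, reducedb Y -> push_walk A Y = push_walk B Y.

Local Notation "A =w B" := (free_equiv A B) (at level 70).

Global Instance free_equiv_Equivalence : Equivalence free_equiv.
Proof.
split=> [A Y _ | A B AB Y redY | A B D AB BD Y redY] //; first by rewrite AB.
by rewrite AB // BD.
Qed.

Global Instance cat_free_equiv_Proper :
  Proper (free_equiv ==> free_equiv ==> free_equiv) (@cat (oedge T)).
Proof.
move=> A A' AA' B B' BB' Y redY.
by rewrite !push_walk_cat BB' // AA' //; apply: reducedb_push_walk.
Qed.

Lemma reduce_free_equiv A : reduce A =w A.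
Proof. exact: push_walk_reduce. Qed.

Lemma free_equiv_reduce A B : A =w B -> reduce A = reduce B.
Proof. by move=> AB; rewrite !reduce_push_walk AB. Qed.

Lemma backtrack_free_equiv e : [:: e; einv e] =w [::].
Proof. by move=> Y redY /=; rewrite -{1}(einvK e) push_edgeK. Qed.

Lemma winv_cat_free_equiv A : winv A ++ A =w [::].
Proof.
elim: A => [|e A IH] // Y redY.
rewrite /winv /= rev_cons -cats1 -catA push_walk_cat /=.
by rewrite push_edgeK; [rewrite -push_walk_cat IH | apply: reducedb_push_walk].
Qed.

End FreeReduction.

Local Notation "A =w B" := (free_equiv A B) (at level 70).

Section Recoloring.
Variables (V C : finType) (eG : rel V) (eH : rel C).
Hypotheses (eG_sym : symmetric eG) (eG_irr : irreflexive eG)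
  (eH_sym : symmetric eH) (eH_mono : mono_nbhd eH).

Section OneStep.
Variables (s t : V -> C) (w : V).
Hypotheses (s_col : is_Hcoloring eG eH s) (t_col : is_Hcoloring eG eH t)
  (s_t_w : s w != t w) (s_t_off_w : forall x, x <> w -> s x = t x).

Lemma step_walk_off x : x <> w -> step_walk eH s t x = [::].
Proof. by move=> xw; rewrite /step_walk s_t_off_w // eqxx. Qed.

Lemma step_walk_at z : eG w z -> step_walk eH s t w = [:: (s w, s z); (s z, t w)].
Proof.
move=> wz.
have zw : z <> w by move=> zE; rewrite zE eG_irr in wz.
have wz_s : eH (s w) (s z) by apply: s_col.
have zw_t : eH (s z) (t w) by rewrite s_t_off_w //; apply: t_col; rewrite eG_sym.
rewrite /step_walk (negbTE s_t_w).
case: pickP => [h /andP[wh hw] | no_h]; last by have := no_h (s z); rewrite wz_s zw_t.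
suff -> : h = s z by [].
by apply: (card_le1_eqP (eH_mono (s w) (t w))); rewrite !inE /= ![eH (t w) _]eH_sym ?wh ?hw ?wz_s ?zw_t.
Qed.

Lemma step_walk_edge x y : eG x y ->
  step_walk eH s t x ++ [:: (t x, t y)] =w (s x, s y) :: step_walk eH s t y.
Proof.
move=> xy.
have [xw | /eqP xw] := eqVneq x w.
  subst x; have yw : y <> w by move=> yE; rewrite yE eG_irr in xy.
  rewrite (step_walk_at xy) (step_walk_off yw) -(s_t_off_w yw).
  exact: (cat_free_equiv_Proper (reflexivity [:: (s w, s y)])
                                (backtrack_free_equiv (s y, t w))).
rewrite (step_walk_off xw) -(s_t_off_w xw).
have [yw | /eqP yw] := eqVneq y w; last first.
  by rewrite (step_walk_off yw) -(s_t_off_w yw).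
subst y; rewrite (step_walk_at (z := x)) /=; last by rewrite eG_sym.
symmetry; exact: (cat_free_equiv_Proper (backtrack_free_equiv (s x, s w))
                                         (reflexivity [:: (s x, t w)])).
Qed.

Lemma step_walk_commute x y W : is_walk eG x y W ->
  step_walk eH s t x ++ wmap t W =w wmap s W ++ step_walk eH s t y.
Proof.
elim: W x => [|[a b] W IH] x /=; first by move=> ->; rewrite cats0.
move=> [<- [ab abW]].
rewrite -cat1s catA (step_walk_edge ab) cat_cons.
by apply: (cat_free_equiv_Proper (reflexivity [:: _])); apply: IH.
Qed.

End OneStep.

Lemma is_recoloring_seq_head s0 rest :
  is_recoloring_seq eG eH s0 rest -> is_Hcoloring eG eH s0.
Proof. by case: rest => [|s1 r] //= []. Qed.

Lemma seq_walk_commute u v W s0 rest :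
  is_walk eG u v W -> is_recoloring_seq eG eH s0 rest ->
  seq_walk eH s0 rest u ++ wmap (last s0 rest) W =w
  wmap s0 W ++ seq_walk eH s0 rest v.
Proof.
move=> uvW; elim: rest s0 => [|s1 r IH] s0 /=; first by rewrite cats0.
move=> [s0_col [[w [s01_w s01_off_w]] r_rec]].
rewrite -catA (IH _ r_rec) !catA.
apply: cat_free_equiv_Proper => //=.
exact: (step_walk_commute s0_col (is_recoloring_seq_head r_rec) s01_w s01_off_w uvW).
Qed.

End Recoloring.

Theorem mainTheorem1 (V C : finType) (eG : rel V) (eH : rel C)
  (eG_sym : symmetric eG) (eG_irr : irreflexive eG)
  (eG_conn : forall x y, connect eG x y) (eG_edge : exists x y, eG x y)
  (eH_sym : symmetric eH)
  (eH_conn : forall x y, connect eH x y) (eH_edge : exists x y, eH x y)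
  (eH_mono : mono_nbhd eH)
  (s0 : V -> C) (rest : seq (V -> C))
  (hS : is_recoloring_seq eG eH s0 rest)
  (u v : V) (W : walk V) (hW : is_walk eG u v W) :
  reduce (seq_walk eH s0 rest v) =
  wdot (wdot (winv (reduce (wmap s0 W))) (reduce (seq_walk eH s0 rest u)))
       (reduce (wmap (last s0 rest) W)).
Proof.
apply: free_equiv_reduce; symmetry.
set Z := reduce (wmap s0 W).
rewrite /wdot !reduce_free_equiv -catA.
rewrite (seq_walk_commute eG_sym eG_irr eH_sym eH_mono hW hS).
rewrite -(reduce_free_equiv (wmap s0 W)) -/Z catA winv_cat_free_equiv.
reflexivity.
Qed.
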